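(* For every RelReach instance with $\mathsf{comp}\in\{\ge,>,\not\approx_\epsilon\mid \epsilon\in\mathbb Q_{\ge0}\}$ satisfying one of the conditions (a) $n=m$; (b) for all $i,i'$: $k_i=k_{i'}\Rightarrow s_i=s_{i'}$, and all $T_i$ are absorbing; (c) for all $i,i'$: $k_i=k_{i'}\Rightarrow((q_i\ge0\iff q_{i'}\ge 0)\wedge T_i=T_{i'})$, the property holds when quantifying over general schedulers if and only if it holds when quantifying over memoryless deterministic schedulers.
   Context: An MDP is $\mathcal M=(S,\mathrm{Act},P)$ with $S,\mathrm{Act}$ finite non-empty and $P:S\times\mathrm{Act}\times S\to[0,1]$ such that each state has a non-empty set of enabled actions $\alpha$ (with $\sum_{s'}P(s,\alpha,s')=1$), and $\sum_{s'}P(s,\alpha,s')=0$ for others. A state is absorbing if $P(s,\alpha,s)=1$ for all enabled $\alpha$; a set is absorbing if all its states are. A general scheduler maps finite paths to distributions over enabled actions of the last state; a memoryless deterministic (MD) scheduler chooses one enabled action depending only on the current state. $\Pr^\sigma_s(\Diamond T)$ is the probability of eventually reaching $T$ from $s$ under $\sigma$. A RelReach property is $\exists \sigma_1,\ldots,\sigma_n.~\sum_{i=1}^m q_i\Pr^{\sigma_{k_i}}_{s_i}(\Diamond T_i)\ \mathsf{comp}\ q_{m+1}$ with $m\ge n$, $q_i\in\mathbb Q$, $s_i\in S$, $\{k_1,\dots,k_m\}=\{1,\dots,n\}$, $T_i\subseteq S$; $r\not\approx_\epsilon r'$ iff $|r-r'|>\epsilon$. *)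

From HB Require Import structures.
From mathcomp Require Import all_boot all_order all_algebra.
From mathcomp Require Import classical_sets reals.
Set Implicit Arguments. Unset Strict Implicit. Unset Printing Implicit Defensive.
Import Order.TTheory GRing.Theory Num.Theory.
Local Open Scope ring_scope.
Local Open Scope classical_set_scope.

Section MDP.
Variables (R : realType) (S Act : finType).
Variable P : S -> Act -> S -> R.

Definition enabled (s : S) (a : Act) : bool := (\sum_(s' : S) P s a s') == 1.

Definition mdp_wf : Prop :=
  [/\ (forall s a s', 0 <= P s a s' <= 1),
      (forall s a, (\sum_(s' : S) P s a s' == 1) || (\sum_(s' : S) P s a s' == 0))
    & (forall s, exists a, enabled s a)].

Definition absorbing_state (s : S) : Prop := forall a, enabled s a -> P s a s = 1.
Definition absorbing (T : {set S}) : Prop := forall s, s \in T -> absorbing_state s.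

(* A finite path s0 a0 s1 a1 ... ak sk is represented by its first state s0
   and the sequence of steps [(a0,s1); ...; (a_{k-1},sk)]. *)
Definition last_state (s0 : S) (h : seq (Act * S)) : S := last s0 [seq x.2 | x <- h].

Definition scheduler := S -> seq (Act * S) -> Act -> R.

Definition is_scheduler (sigma : scheduler) : Prop :=
  forall s0 h,
    [/\ (forall a, 0 <= sigma s0 h a),
        (forall a, ~~ enabled (last_state s0 h) a -> sigma s0 h a = 0)
      & \sum_(a : Act) sigma s0 h a = 1].

Definition is_md (d : S -> Act) : Prop := forall s, enabled s (d s).

Definition md_sched (d : S -> Act) : scheduler :=
  fun s0 h a => if a == d (last_state s0 h) then 1 else 0.

Fixpoint reach_within (sigma : scheduler) (T : {set S}) (s0 : S) (k : nat)
    (h : seq (Act * S)) : R :=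
  let t := last_state s0 h in
  if t \in T then 1 else
  match k with
  | 0 => 0
  | k'.+1 => \sum_(a : Act) \sum_(t' : S)
               sigma s0 h a * P t a t' * reach_within sigma T s0 k' (rcons h (a, t'))
  end.

(* Pr^sigma_s(<> T) = sup_k Pr^sigma_s(reach T within k steps)
   (continuity of the path measure from below) *)
Definition Pr_reach (sigma : scheduler) (s : S) (T : {set S}) : R :=
  sup (range (fun k : nat => reach_within sigma T s k [::])).

End MDP.

Inductive rcomp := CGe | CGt | CNapprox of rat.

Definition comp_ok (c : rcomp) : Prop :=
  match c with CNapprox eps => 0 <= eps | _ => True end.

Definition comp_holds (R : realType) (c : rcomp) (x y : R) : Prop :=
  match c with
  | CGe => y <= x
  | CGt => y < x
  | CNapprox eps => ratr eps < `|x - y|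
  end.

Definition relsum (R : realType) (S Act : finType) (P : S -> Act -> S -> R)
  (n m : nat) (q : 'I_m -> rat) (s : 'I_m -> S) (k : 'I_m -> 'I_n)
  (T : 'I_m -> {set S}) (sig : 'I_n -> scheduler R S Act) : R :=
  \sum_(i < m) ratr (q i) * Pr_reach P (sig (k i)) (s i) (T i).

Definition RelReach_gen (R : realType) (S Act : finType) (P : S -> Act -> S -> R)
  (n m : nat) (q : 'I_m -> rat) (s : 'I_m -> S) (k : 'I_m -> 'I_n)
  (T : 'I_m -> {set S}) (c : rcomp) (qc : rat) : Prop :=
  exists sig : 'I_n -> scheduler R S Act,
    (forall j, is_scheduler P (sig j)) /\
    comp_holds c (relsum P q s k T sig) (ratr qc).

Definition RelReach_md (R : realType) (S Act : finType) (P : S -> Act -> S -> R)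
  (n m : nat) (q : 'I_m -> rat) (s : 'I_m -> S) (k : 'I_m -> 'I_n)
  (T : 'I_m -> {set S}) (c : rcomp) (qc : rat) : Prop :=
  exists d : 'I_n -> S -> Act,
    (forall j, is_md P (d j)) /\
    comp_holds c (relsum P q s k T (fun j => @md_sched R S Act (d j))) (ratr qc).

From HB Require Import structures.
From mathcomp Require Import classical_sets reals.
From mathcomp Require Import all_boot all_order all_algebra.
From mathcomp Require Import lra.
Set Implicit Arguments. Unset Strict Implicit. Unset Printing Implicit Defensive.
Import Order.TTheory GRing.Theory Num.Theory.
Local Open Scope ring_scope.

(* Grouping the terms of the weighted sum by scheduler variable, each group
   [j] is an optimisation problem of its own.  Under (b), and under (c) once
   the common target is made absorbing (case (a) is (c) with singleton
   groups), a group is an objective [sum_i w_i Pr(<> T_i)] over absorbing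
   targets inside an absorbing set [G], and such an objective is maximised,
   and with [-w] minimised, by one MD scheduler uniformly in the start state.
   So any witness lies between the values of an MD minimiser and an MD
   maximiser, and [>=], [>] and [~=_eps] transfer to one of them.

   The uniform MD optimum comes from value iteration on the terminal reward
   [rho = sum_i w_i 1_(T_i)].  Its limit [vstar] bounds every scheduler,
   because the probability mass that never reaches [G] ends up in the states
   where [G] can be avoided forever, where [vstar >= 0].  Conversely, the MD
   scheduler that plays [vstar]-optimal actions, staying inside the
   zero-valued avoiding region or moving closer to [G] or that region,
   attains [vstar] by a maximum principle. *)

(** * Suprema of bounded sequences *)

Section SequenceSup.
Variable R : realType.
Implicit Types (f : nat -> R) (b x : R).

Definition supn f : R := sup (range f).

Definition nondecr f : Prop := forall k, f k <= f k.+1.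

Lemma has_sup_range f b : (forall k, f k <= b) -> has_sup (range f).
Proof. by move=> fb; split; [exists (f 0%N), 0%N | exists b => _ [k _ <-]]. Qed.

Lemma supn_ub f b : (forall k, f k <= b) -> forall k, f k <= supn f.
Proof. by move=> fb k; apply: sup_upper_bound (has_sup_range fb) _ _; exists k. Qed.

Lemma supn_le f x : (forall k, f k <= x) -> supn f <= x.
Proof. by move=> fx; apply: ge_sup; [exists (f 0%N), 0%N | move=> _ [k _ <-]]. Qed.

Lemma supn_cst f x : (forall k, f k = x) -> supn f = x.
Proof.
move=> fx; apply/eqP; rewrite eq_le supn_le => [|k]; last by rewrite fx.
by rewrite -(fx 0%N) (@supn_ub _ x) // => k; rewrite fx.
Qed.

Lemma supn_shift f b : (forall k, f k <= b) -> nondecr f ->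
  supn (fun k => f k.+1) = supn f.
Proof.
move=> fb f_nd; apply/eqP; rewrite eq_le !supn_le // => k.
  by apply: le_trans (f_nd k) _; apply: (@supn_ub (fun k => f k.+1) b).
exact: supn_ub fb _.
Qed.

Lemma supn_approx (I : finType) (F : nat -> I -> R) b :
  (forall k i, F k i <= b) -> (forall i, nondecr (F^~ i)) ->
  forall e, 0 < e -> exists K, forall k i, (K <= k)%N -> supn (F^~ i) - e < F k i.
Proof.
move=> Fb F_nd e e0.
have /fin_all_exists [K HK] : forall i, exists K, supn (F^~ i) - e < F K i.
  by move=> i; have [_ [K _ <-]] := sup_adherent e0 (has_sup_range (Fb^~ i)); exists K.
exists (\max_i K i)%N => k i Kk; apply: lt_le_trans (HK i) _.
apply: (homo_leq (f := F^~ i) lexx (fun y x z => @le_trans _ _ y x z) (F_nd i)).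
by apply: leq_trans Kk; apply: leq_bigmax.
Qed.

Lemma ler_addgt0_scaled x y c : 0 <= c -> (forall e, 0 < e -> x <= y + c * e) -> x <= y.
Proof.
move=> c0 xy; apply/ler_addgt0Pr => e e0.
have ce0 : 0 < e / (c + 1) by rewrite divr_gt0 ?ltr_wpDl.
apply: le_trans (xy _ ce0) _; rewrite lerD2l mulrCA ger_pMr //.
by rewrite ler_pdivrMr ?mul1r ?lerDl ?ltr_wpDl.
Qed.

Lemma supn_lincomb (I : finType) (c : I -> R) (F : nat -> I -> R) b :
  (forall i, 0 <= c i) -> (forall k i, F k i <= b) -> (forall i, nondecr (F^~ i)) ->
  supn (fun k => \sum_i c i * F k i) = \sum_i c i * supn (F^~ i).
Proof.
move=> c0 Fb F_nd; have Fsup i k : F k i <= supn (F^~ i) by apply: supn_ub (Fb^~ i) _.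
apply/eqP; rewrite eq_le supn_le => [|k]; last by apply: ler_sum => i _; apply: ler_wpM2l.
have sum_b k : \sum_i c i * F k i <= \sum_i c i * b.
  by apply: ler_sum => i _; apply: ler_wpM2l.
apply: (@ler_addgt0_scaled _ _ (\sum_i c i)) => [|e e0]; first exact: sumr_ge0.
have [K HK] := supn_approx Fb F_nd e0.
apply: le_trans (lerD (supn_ub sum_b K) (lexx _)); rewrite mulr_suml -big_split /=.
by apply: ler_sum => i _; rewrite -mulrDr ler_wpM2l // -lerBlDr ltW ?HK.
Qed.

Lemma exists_pos_lb (X : finType) (f : X -> R) :
  exists2 p, 0 < p <= 1 & forall i, 0 < f i -> p <= f i.
Proof.
exists (\big[Num.min/1]_(i | 0 < f i) f i) => [|i fi]; last by rewrite (bigD1 i) //= ge_min lexx.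
elim/big_rec: _ => [|i y fi /andP [y0 y1]]; first by rewrite ltr01 lexx.
by rewrite lt_min fi y0 ge_min y1 orbT.
Qed.

End SequenceSup.

(** * Expectations along a scheduler *)

Section MDPExpectation.
Variables (R : realType) (S Act : finType) (P : S -> Act -> S -> R).
Hypothesis wf : mdp_wf P.
Implicit Types (sg : scheduler R S Act) (u t : S) (a : Act) (h : seq (Act * S)).
Implicit Types (w : S -> R).

Lemma P_ge0 u a t : 0 <= P u a t.
Proof. by case: wf => P01 _ _; case/andP: (P01 u a t). Qed.

Lemma P_eq0 u a t : ~~ (0 < P u a t) -> P u a t = 0.
Proof. by rewrite -leNgt => P0; apply/eqP; rewrite eq_le P0 P_ge0. Qed.

Lemma exists_enabled u : exists a, enabled P u a.
Proof. by case: wf. Qed.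

Lemma sum_P_const u a x : enabled P u a -> \sum_t P u a t * x = x.
Proof. by move=> /eqP en; rewrite -mulr_suml en mul1r. Qed.

Lemma sum_P_mono u a w w' : (forall t, w t <= w' t) ->
  \sum_t P u a t * w t <= \sum_t P u a t * w' t.
Proof. by move=> ww'; apply: ler_sum => t _; apply: ler_wpM2l; rewrite ?P_ge0. Qed.

Lemma P_absorbing u a t : absorbing_state P u -> enabled P u a -> P u a t = (t == u)%:R.
Proof.
move=> u_abs en; have Puu := u_abs a en; have [->|tu] := eqVneq t u; first by [].
have : \sum_(t' | t' != u) P u a t' = 0.
  by apply: (@addrI _ 1); move/eqP: en; rewrite addr0 (bigD1 u) //= Puu.
by move/psumr_eq0P => -> // t' _; apply: P_ge0.
Qed.

Lemma sum_P_absorbing u a w : absorbing_state P u -> enabled P u a ->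
  \sum_t P u a t * w t = w u.
Proof.
move=> u_abs en; rewrite (bigD1 u) //= big1 => [|t /negbTE tu].
  by rewrite P_absorbing // eqxx mul1r addr0.
by rewrite P_absorbing // tu mul0r.
Qed.

Lemma sum_P_eq_max u a (x : S -> R) m : enabled P u a ->
  (forall t, 0 < P u a t -> x t <= m) -> \sum_t P u a t * x t = m ->
  forall t, 0 < P u a t -> x t = m.
Proof.
move=> en xm sum_m t Pt.
have gap0 : \sum_t P u a t * (m - x t) = 0.
  by under eq_bigr do rewrite mulrBr; rewrite sumrB sum_m sum_P_const ?subrr.
have gap_ge0 t' : true -> 0 <= P u a t' * (m - x t').
  move=> _; have [Pt'|/P_eq0 ->] := boolP (0 < P u a t'); last by rewrite mul0r.
  by rewrite mulr_ge0 ?subr_ge0 ?xm ?ltW.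
have /eqP := psumr_eq0P gap_ge0 gap0 isT (i := t).
by rewrite mulf_eq0 gt_eqF //= subr_eq0 => /eqP.
Qed.

Lemma absorbing_subset (X Y : {set S}) : X \subset Y -> absorbing P Y -> absorbing P X.
Proof. by move=> XY Y_abs u /(subsetP XY); apply: Y_abs. Qed.

Lemma last_state_rcons s0 h x : last_state s0 (rcons h x) = x.2.
Proof. by rewrite /last_state map_rcons last_rcons. Qed.

Fixpoint expect sg (F : seq (Act * S) -> R) (s0 : S) (k : nat) h : R :=
  match k with
  | 0 => F h
  | k'.+1 => \sum_a \sum_t
      sg s0 h a * P (last_state s0 h) a t * expect sg F s0 k' (rcons h (a, t))
  end.

Lemma expect_tower sg F s0 k l h :
  expect sg F s0 (k + l) h = expect sg (expect sg F s0 l) s0 k h.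
Proof.
by elim: k h => //= k IH h; apply: eq_bigr => a _; apply: eq_bigr => t _; rewrite IH.
Qed.

Lemma expect_add sg F1 F2 s0 k h :
  expect sg (fun h' => F1 h' + F2 h') s0 k h = expect sg F1 s0 k h + expect sg F2 s0 k h.
Proof.
elim: k h => //= k IH h; rewrite -big_split; apply: eq_bigr => a _.
by rewrite -big_split; apply: eq_bigr => t _; rewrite IH mulrDr.
Qed.

Lemma expect_scale sg x F s0 k h :
  expect sg (fun h' => x * F h') s0 k h = x * expect sg F s0 k h.
Proof.
elim: k h => //= k IH h; rewrite mulr_sumr; apply: eq_bigr => a _.
by rewrite mulr_sumr; apply: eq_bigr => t _; rewrite IH mulrCA.
Qed.

Lemma expect_sum sg (I : finType) (c : I -> R) F s0 k h :
  expect sg (fun h' => \sum_i c i * F i h') s0 k h = \sum_i c i * expect sg (F i) s0 k h.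
Proof.
elim: k h => //= k IH h; under eq_bigr do under eq_bigr do rewrite IH mulr_sumr.
under eq_bigr do rewrite exchange_big /=; rewrite exchange_big /=.
apply: eq_bigr => i _; rewrite mulr_sumr; apply: eq_bigr => a _.
by rewrite mulr_sumr; apply: eq_bigr => t _; rewrite mulrCA.
Qed.

Section ValidScheduler.
Variable sg : scheduler R S Act.
Hypothesis sg_valid : is_scheduler P sg.

Lemma sched_ge0 s0 h a : 0 <= sg s0 h a.
Proof. by case: (sg_valid s0 h). Qed.

Lemma sched_avg_le s0 h (g : Act -> S -> R) M :
  (forall a, enabled P (last_state s0 h) a ->
     \sum_t P (last_state s0 h) a t * g a t <= M) ->
  \sum_a \sum_t sg s0 h a * P (last_state s0 h) a t * g a t <= M.
Proof.
case: (sg_valid s0 h) => sg0 sg_en sg1 gM.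
rewrite -[M]mul1r -sg1 mulr_suml; apply: ler_sum => a _.
under eq_bigr do rewrite -mulrA; rewrite -mulr_sumr.
have [en|/sg_en ->] := boolP (enabled P (last_state s0 h) a); last by rewrite !mul0r.
by rewrite ler_wpM2l ?gM.
Qed.

Lemma sched_avg_ge s0 h (g : Act -> S -> R) M :
  (forall a, enabled P (last_state s0 h) a ->
     M <= \sum_t P (last_state s0 h) a t * g a t) ->
  M <= \sum_a \sum_t sg s0 h a * P (last_state s0 h) a t * g a t.
Proof.
move=> Mg; rewrite -lerN2 -sumrN; under eq_bigr do rewrite -sumrN.
under eq_bigr do under eq_bigr do rewrite -mulrN.
apply: sched_avg_le => a en; rewrite -lerN2 opprK -sumrN.
by under eq_bigr do rewrite mulrN opprK; apply: Mg.
Qed.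

Lemma expect_le F1 F2 s0 k h : (forall h', F1 h' <= F2 h') ->
  expect sg F1 s0 k h <= expect sg F2 s0 k h.
Proof.
move=> F12; elim: k h => //= k IH h; apply: ler_sum => a _; apply: ler_sum => t _.
by rewrite ler_wpM2l ?mulr_ge0 ?sched_ge0 ?P_ge0.
Qed.

Lemma expect_const x s0 k h : expect sg (fun=> x) s0 k h = x.
Proof.
elim: k h => //= k IH h; under eq_bigr do under eq_bigr do rewrite IH.
by apply/eqP; rewrite eq_le sched_avg_le ?sched_avg_ge // => a /sum_P_const ->.
Qed.

Lemma expect_absorbing (phi : S -> R) s0 k h : absorbing_state P (last_state s0 h) ->
  expect sg (fun h' => phi (last_state s0 h')) s0 k h = phi (last_state s0 h).
Proof.
elim: k h => //= k IH h h_abs.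
have avg a : enabled P (last_state s0 h) a -> \sum_t P (last_state s0 h) a t *
    expect sg (fun h' => phi (last_state s0 h')) s0 k (rcons h (a, t)) = phi (last_state s0 h).
  move=> en; rewrite -[RHS](sum_P_absorbing phi h_abs en); apply: eq_bigr => t _.
  by rewrite (P_absorbing _ h_abs en); case: eqP => [->|]; rewrite ?mul0r // IH last_state_rcons.
by apply/eqP; rewrite eq_le sched_avg_le ?sched_avg_ge // => a /avg ->.
Qed.

End ValidScheduler.

Definition md_step (d : S -> Act) w : S -> R := fun u => \sum_t P u (d u) t * w t.

Lemma md_sched_valid d : is_md P d -> is_scheduler P (md_sched R d).
Proof.
move=> d_en s0 h; split=> [a|a|]; rewrite /md_sched; first by case: eqP.
  by case: eqP => // ->; rewrite d_en.
by rewrite (bigD1 (d (last_state s0 h))) //= eqxx big1 ?addr0 // => a /negbTE ->.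
Qed.

Lemma expect_md d (phi : S -> R) s0 k h :
  expect (md_sched R d) (fun h' => phi (last_state s0 h')) s0 k h =
  iter k (md_step d) phi (last_state s0 h).
Proof.
elim: k h => //= k IH h; rewrite (bigD1 (d (last_state s0 h))) //= [X in _ + X]big1 => [|a ad].
  by rewrite addr0; apply: eq_bigr => t _; rewrite /md_sched eqxx mul1r IH last_state_rcons.
by apply: big1 => t _; rewrite /md_sched (negbTE ad) !mul0r.
Qed.

(* Maximum principle: at a maximiser of [f] every [d]-successor is again a
   maximiser, and descending along [r] from there ends in [B]. *)
Lemma md_harmonic_le0 d (B : {set S}) (r : S -> nat) (f : S -> R) :
  is_md P d -> (forall u, u \notin B -> exists2 t, 0 < P u (d u) t & (r t < r u)%N) ->
  (forall u, f u = md_step d f u) -> (forall u, u \in B -> f u = 0) ->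
  forall u, f u <= 0.
Proof.
move=> d_en descend f_harm fB u.
have [um _ f_max] := arg_maxP f (isT : predT u).
suff max_le0 n v : (r v <= n)%N -> f v = f um -> f um <= 0.
  exact: le_trans (f_max u isT) (max_le0 _ um (leqnn _) erefl).
elim: n v => [|n IH] v rv fv; (have [vB|vB] := boolP (v \in B); first by rewrite -fv fB).
  by have [t _] := descend v vB; rewrite ltnNge (leq_trans rv).
have [t Pt rt] := descend v vB; apply: (IH t); first by rewrite -ltnS (leq_trans rt).
by apply: (sum_P_eq_max (d_en v) _ _ Pt) => [t' _|]; [apply: f_max | rewrite -fv f_harm].
Qed.

End MDPExpectation.

Section Reachability.
Variables (R : realType) (S Act : finType) (P : S -> Act -> S -> R).
Hypothesis wf : mdp_wf P.
Variable sg : scheduler R S Act.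
Hypothesis sg_valid : is_scheduler P sg.
Implicit Types (u : S) (h : seq (Act * S)) (X : {set S}).

Definition ind X u : R := (u \in X)%:R.

Lemma ind_ge0 X u : 0 <= ind X u.
Proof. by rewrite /ind; case: (u \in X). Qed.

Lemma ind_le1 X u : ind X u <= 1.
Proof. by rewrite /ind; case: (u \in X). Qed.

Lemma expect_ind_ge0 X s0 k h : 0 <= expect P sg (fun h' => ind X (last_state s0 h')) s0 k h.
Proof.
by rewrite -(expect_const sg_valid 0 s0 k h) (expect_le wf sg_valid) // => h'; apply: ind_ge0.
Qed.

Lemma expect_ind_le1 X s0 k h : expect P sg (fun h' => ind X (last_state s0 h')) s0 k h <= 1.
Proof.
by rewrite -(expect_const sg_valid 1 s0 k h) (expect_le wf sg_valid) // => h'; apply: ind_le1.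
Qed.

Lemma expect_ind_nondecr X s0 h : absorbing P X ->
  nondecr (fun k => expect P sg (fun h' => ind X (last_state s0 h')) s0 k h).
Proof.
move=> X_abs k; rewrite -addn1 expect_tower (expect_le wf sg_valid) // => h'.
have [uX|uX] := boolP (last_state s0 h' \in X).
  by rewrite (expect_absorbing wf sg_valid) //; apply: X_abs.
by rewrite {1}/ind (negbTE uX) expect_ind_ge0.
Qed.

Lemma Pr_reach_expect X s : absorbing P X ->
  Pr_reach P sg s X = supn (fun k => expect P sg (fun h => ind X (last_state s h)) s k [::]).
Proof.
move=> X_abs; rewrite /Pr_reach /supn.
suff -> : (fun k => reach_within P sg X s k [::]) =
    (fun k => expect P sg (fun h => ind X (last_state s h)) s k [::]) by [].
apply/boolp.funext => k; elim: k [::] => [|k IH] h; first by rewrite /= /ind; case: (_ \in X).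
rewrite [LHS]/=; case: ifP => [uX|_].
  by rewrite (expect_absorbing wf sg_valid) /ind ?uX //; apply: X_abs.
by apply: eq_bigr => a _; apply: eq_bigr => t _; rewrite IH.
Qed.

End Reachability.

(** * Value iteration and the bound for general schedulers *)

Section Bellman.
Variables (R : realType) (S Act : finType) (P : S -> Act -> S -> R).
Hypothesis wf : mdp_wf P.
Implicit Types (u t : S) (a : Act) (w : S -> R).

Definition some_enabled u : Act := xchoose (exists_enabled wf u).

Definition best_action w u : Act :=
  Order.arg_max (some_enabled u) (enabled P u) (fun a => \sum_t P u a t * w t).

Definition bellman w u : R := \sum_t P u (best_action w u) t * w t.

Lemma best_action_enabled w u : enabled P u (best_action w u).
Proof. by rewrite /best_action; case: arg_maxP => //; apply: xchooseP. Qed.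

Lemma bellman_ge w u a : enabled P u a -> \sum_t P u a t * w t <= bellman w u.
Proof.
by rewrite /bellman /best_action; case: arg_maxP => [|a' _ max_a' /max_a'] //; apply: xchooseP.
Qed.

Lemma bellman_mono w w' u : (forall t, w t <= w' t) -> bellman w u <= bellman w' u.
Proof.
move=> ww'; apply: le_trans (sum_P_mono wf _ _ ww') _.
exact: bellman_ge (best_action_enabled _ _).
Qed.

Lemma bellman_le w b u : (forall t, w t <= b) -> bellman w u <= b.
Proof. by move=> wb; rewrite -(sum_P_const b (best_action_enabled w u)) sum_P_mono. Qed.

Lemma bellman_absorbing w u : absorbing_state P u -> bellman w u = w u.
Proof. by move=> u_abs; rewrite /bellman sum_P_absorbing ?best_action_enabled. Qed.

Lemma expect_le_bellman sg (phi : S -> R) s0 k h : is_scheduler P sg ->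
  expect P sg (fun h' => phi (last_state s0 h')) s0 k h <= iter k bellman phi (last_state s0 h).
Proof.
move=> sg_valid; elim: k h => //= k IH h.
apply: le_trans (_ : _ <= \sum_a \sum_t
  sg s0 h a * P (last_state s0 h) a t * iter k bellman phi t) _; last first.
  by apply: (sched_avg_le sg_valid) => a /bellman_ge.
apply: ler_sum => a _; apply: ler_sum => t _.
rewrite ler_wpM2l ?mulr_ge0 ?(sched_ge0 sg_valid) ?(P_ge0 wf) //.
by apply: le_trans (IH _) _; rewrite last_state_rcons.
Qed.

End Bellman.

Section Attractor.
Variables (R : realType) (S Act : finType) (P : S -> Act -> S -> R).
Hypothesis wf : mdp_wf P.
Variable G : {set S}.
Hypothesis G_abs : absorbing P G.
Implicit Types (u t : S) (X : {set S}).

Definition attr_step X : {set S} :=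
  G :|: [set u | [forall a, enabled P u a ==> [exists t, (t \in X) && (0 < P u a t)]]].

Lemma attr_step_mono : {homo attr_step : X Y / X \subset Y}.
Proof.
move=> X Y XY; apply/subsetP => u; rewrite !inE => /orP [->//|/forallP u_forced].
apply/orP; right; apply/forallP => a; apply/implyP => /(implyP (u_forced a)).
by case/existsP => t /andP [tX Pt]; apply/existsP; exists t; rewrite Pt (subsetP XY).
Qed.

(* [attr] is the set of states from which every scheduler reaches [G] with
   positive probability; from [safe] some action avoids [G] forever. *)
Definition attr : {set S} := fixset attr_step.
Definition safe : {set S} := ~: attr.

Lemma attr_fix : attr_step attr = attr.
Proof. exact: fixsetK attr_step_mono. Qed.

Lemma safe_notin u : u \in safe -> u \notin G.
Proof. by rewrite inE -attr_fix inE negb_or => /andP []. Qed.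

Lemma safe_stay u : u \in safe -> exists2 a, enabled P u a & forall t, 0 < P u a t -> t \in safe.
Proof.
rewrite inE -attr_fix !inE negb_or => /andP [_ /forallPn [a]].
rewrite negb_imply => /andP [en /existsPn not_out]; exists a => // t Pt.
by move: (not_out t); rewrite Pt andbT inE.
Qed.

Section Escape.
Variable sg : scheduler R S Act.
Hypothesis sg_valid : is_scheduler P sg.
Variable p : R.
Hypotheses (p_gt0 : 0 < p) (p_le1 : p <= 1) (p_lb : forall u a t, 0 < P u a t -> p <= P u a t).

Local Notation Pin X s0 k h := (expect P sg (fun h' => ind R X (last_state s0 h')) s0 k h).

Lemma attr_iter_reach j s0 h : last_state s0 h \in iter j attr_step set0 ->
  p ^+ j <= Pin G s0 j h.
Proof.
elim: j h => [|j IH] h; first by rewrite inE.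
rewrite iterS !inE => /orP [uG|/forallP u_forced].
  rewrite (expect_absorbing wf sg_valid); last exact: G_abs.
  by rewrite /ind uG; apply: exprn_ile1 => //; apply: ltW.
rewrite [X in _ <= X]/=; apply: (sched_avg_ge sg_valid) => a en.
have /existsP [t /andP [tX Pt]] := implyP (u_forced a) en.
rewrite (bigD1 t) // exprS -[_ * _]addr0; apply: lerD.
  apply: ler_pM; [exact: ltW | exact: exprn_ge0 (ltW p_gt0) | exact: p_lb |].
  by apply: IH; rewrite last_state_rcons.
by rewrite sumr_ge0 // => t' _; rewrite mulr_ge0 ?(P_ge0 wf) ?(expect_ind_ge0 wf sg_valid).
Qed.

(* From [attr], [G] is reached within [#|S|] steps with probability
   at least [p ^+ #|S|]. *)
Lemma expect_reach_progress s0 k h :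
  Pin G s0 k h + p ^+ #|S| * Pin (attr :\: G) s0 k h <= Pin G s0 (k + #|S|) h.
Proof.
rewrite expect_tower -expect_scale -expect_add; apply: (expect_le wf sg_valid) => h'.
have [uG|uG] := boolP (last_state s0 h' \in G).
  rewrite (expect_absorbing wf sg_valid); last exact: G_abs.
  by rewrite /ind !inE uG /= mulr0 addr0.
rewrite /ind (negbTE uG) add0r inE uG /=; have [uC|uC] := boolP (_ \in attr).
  by rewrite mulr1; apply: attr_iter_reach.
by rewrite mulr0 (expect_ind_ge0 wf sg_valid).
Qed.

Lemma expect_attr_small e s0 K : 0 < e ->
  exists2 k, (K <= k)%N & Pin (attr :\: G) s0 k [::] <= e.
Proof.
move=> e0; have [//|big] := boolp.pselect
  (exists2 k, (K <= k)%N & Pin (attr :\: G) s0 k [::] <= e).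
have pe0 : 0 < p ^+ #|S| * e by rewrite mulr_gt0 ?exprn_gt0.
have grow j : j%:R * (p ^+ #|S| * e) <= Pin G s0 (K + j * #|S|) [::].
  elim: j => [|j IH]; first by rewrite mul0r (expect_ind_ge0 wf sg_valid).
  rewrite mulSnr addnA -natr1 mulrDl mul1r; apply: le_trans (expect_reach_progress _ _ _).
  apply: lerD IH (ler_wpM2l (ltW (exprn_gt0 _ p_gt0)) _); rewrite leNgt; apply/negP => small.
  by apply: big; exists (K + j * #|S|)%N; rewrite ?leq_addr ?ltW.
have := le_trans (grow (Num.Def.archi_bound (p ^+ #|S| * e)^-1))
  (expect_ind_le1 wf sg_valid _ _ _ _).
by rewrite -ler_pdivlMr // div1r leNgt archi_boundP ?invr_ge0 ?ltW.
Qed.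

End Escape.
End Attractor.

Section ValueIteration.
Variables (R : realType) (S Act : finType) (P : S -> Act -> S -> R).
Hypothesis wf : mdp_wf P.
Variable G : {set S}.
Hypothesis G_abs : absorbing P G.
Variables (I : finType) (wt : I -> R) (Tt : I -> {set S}).
Hypothesis Tt_sub : forall i, Tt i \subset G.
Implicit Types (u t : S) (a : Act) (w : S -> R).

Local Notation bellman := (bellman wf).
Local Notation safe := (safe P G).
Local Notation attr := (attr P G).
Local Notation attr_step := (attr_step P G).

Definition objective (sg : scheduler R S Act) (s : S) : R :=
  \sum_i wt i * supn (fun k => expect P sg (fun h => ind R (Tt i) (last_state s h)) s k [::]).

Definition rho u : R := \sum_i wt i * ind R (Tt i) u.

Lemma rho_out u : u \notin G -> rho u = 0.
Proof.
move=> uG; apply: big1 => i _; rewrite /ind (contraNF (subsetP (Tt_sub i) u)) ?mulr0 //.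
Qed.

Definition rho_bound : R := \sum_u `|rho u|.

Lemma norm_rho_le u : `|rho u| <= rho_bound.
Proof. by rewrite /rho_bound (bigD1 u) //= lerDl sumr_ge0. Qed.

Lemma rho_bound_ge0 : 0 <= rho_bound.
Proof. exact: sumr_ge0. Qed.

(* [v0 <= bellman v0], so value iteration increases: on [safe] the value [0]
   can be kept forever, elsewhere [- rho_bound] is a lower bound. *)
Definition v0 u : R := if u \in G then rho u else if u \in safe then 0 else - rho_bound.
Definition viter k : S -> R := iter k bellman v0.
Definition vstar u : R := supn (fun k => viter k u).

Lemma norm_v0_le u : `|v0 u| <= rho_bound.
Proof.
rewrite /v0; case: ifP => _; first exact: norm_rho_le.
by case: ifP => _; rewrite ?normr0 ?normrN ?ger0_norm ?rho_bound_ge0.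
Qed.

Lemma v0_le_bellman u : v0 u <= bellman v0 u.
Proof.
have [uG|uG] := boolP (u \in G); first by rewrite (bellman_absorbing wf) //; apply: G_abs.
have [uZ|uZ] := boolP (u \in safe); last first.
  have [a en] := exists_enabled wf u; apply: le_trans (bellman_ge wf _ en).
  rewrite {1}/v0 (negbTE uG) (negbTE uZ) -(sum_P_const (- rho_bound) en).
  by apply: (sum_P_mono wf) => t; have := norm_v0_le t; rewrite ler_norml => /andP [].
have [a en a_safe] := safe_stay uZ; apply: le_trans (bellman_ge wf _ en).
rewrite /v0 (negbTE uG) uZ sumr_ge0 // => t _.
have [/a_safe tZ|/(P_eq0 wf) ->] := boolP (0 < P u a t); last by rewrite mul0r.
by rewrite /v0 (negbTE (safe_notin tZ)) tZ mulr0.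
Qed.

Lemma viter_nondecr u : nondecr (viter^~ u).
Proof.
move=> k; elim: k u => [|k IH] u; first exact: v0_le_bellman.
by rewrite /viter !iterS; apply: (bellman_mono wf) => t; apply: IH.
Qed.

Lemma viter_le k u : viter k u <= rho_bound.
Proof.
elim: k u => [|k IH] u; last by rewrite /viter iterS (bellman_le wf).
by have := norm_v0_le u; rewrite ler_norml => /andP [].
Qed.

Lemma viter_le_vstar k u : viter k u <= vstar u.
Proof. exact: supn_ub (viter_le^~ u) k. Qed.

Lemma vstar_le_superfix w : (forall u, v0 u <= w u) -> (forall u, bellman w u <= w u) ->
  forall u, vstar u <= w u.
Proof.
move=> v0w bw u; apply: supn_le => k; elim: k u => // k IH u.
by rewrite /viter iterS; apply: le_trans (bw u); apply: (bellman_mono wf) => t; apply: IH.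
Qed.

Lemma sum_P_vstar_le u a : enabled P u a -> \sum_t P u a t * vstar t <= vstar u.
Proof.
move=> en; rewrite /vstar -(supn_lincomb (P_ge0 wf u a) viter_le (fun t => viter_nondecr t)).
apply: supn_le => k; apply: le_trans (bellman_ge wf _ en) _.
by have := viter_le_vstar k.+1 u; rewrite /viter iterS.
Qed.

Lemma bellman_vstar u : bellman vstar u = vstar u.
Proof.
apply/eqP; rewrite eq_le sum_P_vstar_le ?(best_action_enabled wf) //=.
apply: supn_le => -[|k].
  by apply: le_trans (v0_le_bellman u) _; apply: (bellman_mono wf) => t; apply: (viter_le_vstar 0).
by rewrite /viter iterS; apply: (bellman_mono wf) => t; apply: viter_le_vstar.
Qed.

Lemma vstar_in_G u : u \in G -> vstar u = rho u.
Proof.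
move=> uG; apply: supn_cst; elim=> [|k IH]; first by rewrite /viter /= /v0 uG.
by rewrite /viter iterS (bellman_absorbing wf); [exact: IH | exact: G_abs].
Qed.

Lemma vstar_safe_ge0 u : u \in safe -> 0 <= vstar u.
Proof.
move=> uZ; apply: le_trans (viter_le_vstar 0 u).
by rewrite /viter /= /v0 (negbTE (safe_notin uZ)) uZ.
Qed.

Lemma rho_le_v0 u : rho u <= v0 u + rho_bound * ind R (attr :\: G) u.
Proof.
rewrite /v0 /ind in_setD; have [uG|uG] /= := boolP (u \in G); first by rewrite mulr0 addr0.
by rewrite rho_out // in_setC; case: (u \in attr); rewrite ?mulr0 ?addr0 ?mulr1 ?addNr.
Qed.

Section GeneralScheduler.
Variable sg : scheduler R S Act.
Hypothesis sg_valid : is_scheduler P sg.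

Local Notation Pin X s0 k := (expect P sg (fun h => ind R X (last_state s0 h)) s0 k [::]).

Lemma objective_approx s e : 0 < e ->
  exists K, forall k, (K <= k)%N ->
    objective sg s <= expect P sg (fun h => rho (last_state s h)) s k [::] + (\sum_i `|wt i|) * e.
Proof.
move=> e0; pose F k i := Pin (Tt i) s k.
have F_le1 k i : F k i <= 1 by apply: expect_ind_le1.
have F_nd i : nondecr (F^~ i).
  exact: (expect_ind_nondecr wf sg_valid) (absorbing_subset (Tt_sub i) G_abs).
have [K HK] := supn_approx F_le1 F_nd e0.
exists K => k Kk; rewrite /rho expect_sum mulr_suml -big_split; apply: ler_sum => i _ /=.
have gap : `|supn (F^~ i) - F k i| <= e.
  rewrite ger0_norm ?subr_ge0 ?(supn_ub (F_le1^~ i)) //.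
  by rewrite lerBlDr addrC -lerBlDr ltW ?HK.
rewrite -lerBlDl -mulrBr; apply: le_trans (ler_norm _) _.
by rewrite normrM ler_wpM2l.
Qed.

Lemma expect_rho_le s k :
  expect P sg (fun h => rho (last_state s h)) s k [::] <=
  vstar s + rho_bound * Pin (attr :\: G) s k.
Proof.
apply: le_trans (expect_le wf sg_valid s k [::] (fun h => rho_le_v0 (last_state s h))) _.
rewrite expect_add expect_scale lerD2r.
exact: le_trans (expect_le_bellman wf v0 s k [::] sg_valid) (viter_le_vstar k s).
Qed.

Lemma objective_le_vstar s : objective sg s <= vstar s.
Proof.
have [p /andP [p0 p1] p_lb] := exists_pos_lb (fun x : S * Act * S => P x.1.1 x.1.2 x.2).
apply: (@ler_addgt0_scaled _ _ _ (\sum_i `|wt i| + rho_bound)) => [|e e0].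
  by rewrite addr_ge0 ?sumr_ge0 ?rho_bound_ge0.
have [K HK] := objective_approx s e0.
have [k Kk small] := expect_attr_small wf G_abs sg_valid p0 p1 (fun u a t => p_lb (u, a, t)) s K e0.
apply: le_trans (HK k Kk) _; rewrite mulrDl addrCA [X in X <= _]addrC lerD2l.
by apply: le_trans (expect_rho_le s k) _; rewrite lerD2l ler_wpM2l ?rho_bound_ge0.
Qed.

End GeneralScheduler.

(** * An optimal memoryless deterministic scheduler *)

Definition opt_action u a : bool := enabled P u a && (\sum_t P u a t * vstar t == vstar u).

Definition opt_closed (X : {set S}) : Prop :=
  forall v a t, v \in X -> opt_action v a -> 0 < P v a t -> t \in X.

Lemma best_action_opt u : opt_action u (best_action wf vstar u).
Proof. by rewrite /opt_action best_action_enabled; apply/eqP; apply: bellman_vstar. Qed.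

Definition zero_safe : {set S} := [set u in safe | vstar u <= 0].

Lemma zero_safe_vstar u : u \in zero_safe -> vstar u = 0.
Proof. by rewrite inE => /andP [uZ u_le0]; apply/eqP; rewrite eq_le u_le0 vstar_safe_ge0. Qed.

Lemma zero_safe_notin u : u \in zero_safe -> u \notin G.
Proof. by rewrite inE => /andP [/safe_notin]. Qed.

Lemma zero_safe_stay u : u \in zero_safe ->
  exists2 a, opt_action u a & forall t, 0 < P u a t -> t \in zero_safe.
Proof.
move=> uY; have /andP [uZ _] : (u \in safe) && (vstar u <= 0) by move: uY; rewrite inE.
have [a en a_safe] := safe_stay uZ.
have term_ge0 t : true -> 0 <= P u a t * vstar t.
  move=> _; have [/a_safe tZ|/(P_eq0 wf) ->] := boolP (0 < P u a t); last by rewrite mul0r.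
  by rewrite mulr_ge0 ?(P_ge0 wf) ?vstar_safe_ge0.
have sum0 : \sum_t P u a t * vstar t = 0.
  apply/eqP; rewrite eq_le (sumr_ge0 _ term_ge0) andbT.
  by rewrite -[X in _ <= X](zero_safe_vstar uY) sum_P_vstar_le.
exists a; first by rewrite /opt_action en sum0 zero_safe_vstar ?eqxx.
move=> t Pt; have /eqP := psumr_eq0P term_ge0 sum0 (i := t) isT.
by rewrite mulf_eq0 gt_eqF //= inE a_safe //= => /eqP ->.
Qed.

Definition opt_step (X : {set S}) : {set S} := G :|: zero_safe :|:
  [set u | [exists a, opt_action u a && [exists t, (t \in X) && (0 < P u a t)]]].

Lemma opt_step_mono : {homo opt_step : X Y / X \subset Y}.
Proof.
move=> X Y XY; apply/subsetP => u; rewrite !inE => /orP [->//|/existsP [a /andP [opt]]].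
case/existsP => t /andP [tX Pt]; apply/orP; right; apply/existsP; exists a.
by rewrite opt; apply/existsP; exists t; rewrite Pt (subsetP XY).
Qed.

(* [opt_attr] is the set of states from which optimal actions reach [G] or
   [zero_safe] with positive probability; [opt_rank] is the number of steps. *)
Definition opt_attr : {set S} := fixset opt_step.
Definition opt_rank (u : S) : nat := fix_order opt_step u.

Lemma opt_attr_fix : opt_step opt_attr = opt_attr.
Proof. exact: fixsetK opt_step_mono. Qed.

Lemma opt_gap : exists2 g, 0 < g & forall v a, enabled P v a -> ~~ opt_action v a ->
  g <= vstar v - \sum_t P v a t * vstar t.
Proof.
have [g /andP [g0 _] g_lb] :=
  exists_pos_lb (fun x : S * Act => vstar x.1 - \sum_t P x.1 x.2 t * vstar t).
exists g => // v a en nopt; apply: (g_lb (v, a)).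
by rewrite subr_gt0 lt_neqAle sum_P_vstar_le // andbT; move: nopt; rewrite /opt_action en.
Qed.

(* Optimal actions stay in [M]; the others lose at least [g >= eps]. *)
Lemma bellman_vstar_dip (M : {set S}) eps g : opt_closed M -> 0 <= eps <= g ->
  (forall v a, enabled P v a -> ~~ opt_action v a -> g <= vstar v - \sum_t P v a t * vstar t) ->
  forall v, bellman (fun t => vstar t - eps * ind R M t) v <= vstar v - eps * ind R M v.
Proof.
move=> M_closed /andP [eps0 eps_g] gap v; set w := fun t => _.
suff avg a : enabled P v a -> \sum_t P v a t * w t <= w v.
  exact/avg/best_action_enabled.
move=> en; have -> : \sum_t P v a t * w t =
    \sum_t P v a t * vstar t - eps * \sum_t P v a t * ind R M t.
  by rewrite mulr_sumr -sumrB; apply: eq_bigr => t _; rewrite mulrBr mulrCA.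
have PM_ge0 : 0 <= eps * \sum_t P v a t * ind R M t.
  by rewrite mulr_ge0 // sumr_ge0 // => t _; rewrite mulr_ge0 ?(P_ge0 wf) ?ind_ge0.
have [vM|vM] := boolP (v \in M); last first.
  rewrite /w /ind (negbTE vM) mulr0 subr0 lerBlDr (le_trans (sum_P_vstar_le en)) //.
  by rewrite lerDl.
have [opt|nopt] := boolP (opt_action v a); last first.
  have := gap v a en nopt; rewrite /w /ind vM mulr1; move: PM_ge0 eps_g.
  by set x := \sum_t P v a t * vstar t; set y := eps * _; lra.
have -> : \sum_t P v a t * ind R M t = 1.
  rewrite -(eqP en); apply: eq_bigr => t _; rewrite /ind.
  by have [Pt|/(P_eq0 wf) ->] := boolP (0 < P v a t); rewrite ?mul0r // (M_closed v a t) ?mulr1.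
by case/andP: opt => _ /eqP ->; rewrite /w /ind vM !mulr1.
Qed.

(* Otherwise [vstar] lowered on [M] would be a smaller super-fixpoint above [v0]. *)
Lemma opt_closed_level_set0 (M : {set S}) m : M \subset safe -> opt_closed M ->
  (forall v, v \in M -> vstar v = m) -> 0 < m -> M = set0.
Proof.
move=> M_safe M_closed M_m m0; apply/eqP/set0Pn => -[u uM].
have [g g0 gap] := opt_gap; pose eps := Num.min g m.
have eps0 : 0 < eps by rewrite lt_min g0 m0.
have eps_g : 0 <= eps <= g by rewrite ltW // ge_min lexx.
have v0_le v : v0 v <= vstar v - eps * ind R M v.
  rewrite /ind; have [vM|vM] := boolP (v \in M); last by rewrite mulr0 subr0 (viter_le_vstar 0).
  have vZ := subsetP M_safe v vM.
  by rewrite /v0 (negbTE (safe_notin vZ)) vZ mulr1 M_m // subr_ge0 ge_min lexx orbT.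
have := vstar_le_superfix v0_le (bellman_vstar_dip M_closed eps_g gap) u.
by rewrite /ind uM mulr1 M_m // lerBrDr gerDl leNgt eps0.
Qed.

Lemma opt_closed_safe (V : {set S}) : opt_closed V -> (forall v, v \in V -> v \notin G) ->
  V \subset safe.
Proof.
move=> V_closed VG; apply/subsetP => v vV; rewrite inE.
suff out j : forall v, v \in V -> v \notin iter j attr_step set0 by apply: out.
elim: j => [|j IH] v' v'V; first by rewrite inE.
rewrite iterS !inE negb_or VG //=; apply/forallPn; exists (best_action wf vstar v').
rewrite negb_imply best_action_enabled /=; apply/existsPn => t; apply/negP => /andP [tj Pt].
by move: (IH t (V_closed _ _ _ v'V (best_action_opt v') Pt)); rewrite tj.
Qed.

(* Off [opt_attr] lies an [opt_closed] part of [safe] with positive values,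
   whose top level set contradicts [opt_closed_level_set0]. *)
Lemma opt_attr_full u : u \in opt_attr.
Proof.
apply/negPn/negP => u_out; set V := ~: opt_attr.
have V_closed : opt_closed V.
  move=> v a t; rewrite !inE => vV opt Pt; apply: contra vV => tL.
  rewrite -opt_attr_fix !inE; apply/orP; right; apply/existsP; exists a.
  by rewrite opt; apply/existsP; exists t; rewrite tL Pt.
have V_out v : v \in V -> (v \notin G) && (v \notin zero_safe).
  by rewrite inE -opt_attr_fix !inE !negb_or => /andP [].
have V_safe : V \subset safe by apply: opt_closed_safe => // v /V_out /andP [].
have uV : u \in V by rewrite inE.
have [um umV um_max] := arg_maxP vstar uV.
pose M := [set v in V | vstar v == vstar um].
suff : M = set0 by move/setP/(_ um); rewrite in_set0 inE eqxx andbT => /negbT /negP; apply.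
apply: (opt_closed_level_set0 (m := vstar um)).
- by apply: subset_trans V_safe; apply/subsetP => v; rewrite inE => /andP [].
- move=> v a t; rewrite inE => /andP [vV /eqP vm] opt Pt; rewrite inE (V_closed v a t) //=.
  case/andP: (opt) => en /eqP sum_v; apply/eqP.
  apply: (sum_P_eq_max wf en _ _ Pt) => [t' Pt'|]; last by rewrite sum_v vm.
  exact/um_max/(V_closed v a t').
- by move=> v; rewrite inE => /andP [_ /eqP].
- have /andP [_] := V_out um umV; rewrite inE (subsetP V_safe um umV) /=.
  by rewrite -ltNge.
Qed.

Lemma opt_rank_descend u : u \notin G -> u \notin zero_safe ->
  exists2 a, opt_action u a & exists2 t, 0 < P u a t & (opt_rank t < opt_rank u)%N.
Proof.
move=> uG uY; have := in_iter_fix_orderE opt_step u; rewrite -/opt_attr opt_attr_full.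
have := fix_order_gt0 opt_step u; rewrite -/opt_attr opt_attr_full -/(opt_rank u).
case: (opt_rank u) => [//|r] _; rewrite iterS !in_setU (negbTE uG) (negbTE uY) /= inE.
case/existsP => a /andP [opt /existsP [t /andP [tr Pt]]]; exists a => //; exists t => //.
by rewrite ltnS (fix_order_small opt_step_mono).
Qed.

Definition opt_choice u a : Prop := [/\ opt_action u a,
    u \in zero_safe -> forall t, 0 < P u a t -> t \in zero_safe
  & u \notin G -> u \notin zero_safe -> exists2 t, 0 < P u a t & (opt_rank t < opt_rank u)%N].

Lemma exists_opt_md : exists d : S -> Act, forall u, opt_choice u (d u).
Proof.
apply: fin_all_exists => u; have [uG|uG] := boolP (u \in G).
  have [a en] := exists_enabled wf u; exists a; split; last by rewrite uG.
    by rewrite /opt_action en sum_P_absorbing ?eqxx //; apply: G_abs.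
  by move=> /zero_safe_notin; rewrite uG.
have [uY|uY] := boolP (u \in zero_safe).
  by have [a opt a_stay] := zero_safe_stay uY; exists a; split=> // _ /negP.
have [a opt [t Pt rt]] := opt_rank_descend uG uY.
by exists a; split=> // [uY'|_ _]; [rewrite uY' in uY | exists t].
Qed.

Section OptimalMD.
Variable d : S -> Act.
Hypothesis d_choice : forall u, opt_choice u (d u).

Lemma opt_choice_md : is_md P d.
Proof. by move=> u; case: (d_choice u) => /andP []. Qed.

Local Notation md_iter X k := (iter k (md_step P d) (ind R X)).

Lemma md_iter_expect X k u :
  md_iter X k u = expect P (md_sched R d) (fun h => ind R X (last_state u h)) u k [::].
Proof. by rewrite expect_md. Qed.

Lemma md_iter_le1 X k u : md_iter X k u <= 1.
Proof. by rewrite md_iter_expect (expect_ind_le1 wf (md_sched_valid opt_choice_md)). Qed.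

Lemma md_iter_nondecr X u : absorbing P X -> nondecr (fun k => md_iter X k u).
Proof.
move=> X_abs k; rewrite !md_iter_expect.
exact: (expect_ind_nondecr wf (md_sched_valid opt_choice_md)).
Qed.

Definition md_reach i u : R := supn (fun k => md_iter (Tt i) k u).

Lemma md_reach_harmonic i u : md_reach i u = md_step P d (md_reach i) u.
Proof.
have Ti_abs := absorbing_subset (Tt_sub i) G_abs.
rewrite /md_reach -(supn_shift (md_iter_le1 _ ^~ u) (md_iter_nondecr u Ti_abs)).
have -> : (fun k => md_iter (Tt i) k.+1 u) =
  (fun k => \sum_t P u (d u) t * md_iter (Tt i) k t) by [].
exact: supn_lincomb (P_ge0 wf u (d u)) (md_iter_le1 (Tt i)) (fun t => md_iter_nondecr t Ti_abs).
Qed.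

Lemma objective_md u : objective (md_sched R d) u = \sum_i wt i * md_reach i u.
Proof.
apply: eq_bigr => i _; congr (_ * supn _).
by apply/boolp.funext => k; rewrite md_iter_expect.
Qed.

Lemma objective_md_harmonic u :
  objective (md_sched R d) u = md_step P d (objective (md_sched R d)) u.
Proof.
rewrite /md_step objective_md; under eq_bigr do rewrite md_reach_harmonic /md_step mulr_sumr.
rewrite exchange_big; apply: eq_bigr => t _; rewrite objective_md mulr_sumr.
by apply: eq_bigr => i _; rewrite mulrCA.
Qed.

Lemma objective_md_in_G u : u \in G -> objective (md_sched R d) u = rho u.
Proof.
move=> uG; rewrite objective_md; apply: eq_bigr => i _; congr (_ * _).
apply: supn_cst; elim=> // k IH; rewrite iterS /md_step sum_P_absorbing //.
  exact: G_abs.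
exact: opt_choice_md.
Qed.

Lemma objective_md_zero_safe u : u \in zero_safe -> objective (md_sched R d) u = 0.
Proof.
move=> uY; rewrite objective_md big1 // => i _; rewrite /md_reach (@supn_cst _ _ 0) ?mulr0 //.
move=> k; elim: k u uY => [|k IH] u uY.
  by rewrite /= /ind (contraNF (subsetP (Tt_sub i) u)) ?zero_safe_notin.
rewrite iterS /md_step big1 // => t _; case: (d_choice u) => _ d_stay _.
have [/(d_stay uY) tY|/(P_eq0 wf) ->] := boolP (0 < P u (d u) t); last by rewrite mul0r.
by rewrite IH ?mulr0.
Qed.

Lemma vstar_le_objective_md u : vstar u <= objective (md_sched R d) u.
Proof.
rewrite -subr_le0; apply: (md_harmonic_le0 wf opt_choice_md (B := G :|: zero_safe)
  (r := opt_rank) (f := fun v => vstar v - objective (md_sched R d) v)).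
- by move=> v; rewrite in_setU negb_or => /andP [vG vY]; case: (d_choice v) => _ _; apply.
- move=> v; rewrite /md_step; under eq_bigr do rewrite mulrBr.
  rewrite sumrB [objective _ v]objective_md_harmonic /md_step.
  by case: (d_choice v) => /andP [_ /eqP ->].
- move=> v; rewrite in_setU => /orP [vG|vY].
    by rewrite objective_md_in_G // vstar_in_G // subrr.
  by rewrite objective_md_zero_safe // zero_safe_vstar // subrr.
Qed.

End OptimalMD.

Theorem objective_md_optimal : exists2 d, is_md P d &
  forall sg, is_scheduler P sg -> forall s, objective sg s <= objective (md_sched R d) s.
Proof.
have [d d_choice] := exists_opt_md; exists d; first exact: opt_choice_md.
move=> sg sg_valid s.
exact: le_trans (objective_le_vstar sg_valid s) (vstar_le_objective_md d_choice s).
Qed.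

End ValueIteration.

(** * From the objective to RelReach *)

Section AbsorbingTarget.
Variables (R : realType) (S Act : finType) (P : S -> Act -> S -> R).
Hypothesis wf : mdp_wf P.
Variable T0 : {set S}.
Implicit Types (u t : S) (a : Act) (sg : scheduler R S Act).

Definition absorb_at : S -> Act -> S -> R :=
  fun u a t => if u \in T0 then (t == u)%:R else P u a t.

Lemma sum_eq_indicator u : \sum_t (t == u)%:R = 1 :> R.
Proof. by rewrite (bigD1 u) //= eqxx big1 ?addr0 // => t /negbTE ->. Qed.

Lemma enabled_absorb_at u a : enabled P u a -> enabled absorb_at u a.
Proof. by rewrite /enabled /absorb_at; case: (u \in T0); rewrite ?sum_eq_indicator. Qed.

Lemma absorb_at_wf : mdp_wf absorb_at.
Proof.
case: wf => P01 P_rows P_en; split=> [u a t|u a|u]; rewrite /absorb_at.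
- by case: (u \in T0); [case: (t == u); rewrite ?lexx ?ler01 | apply: P01].
- by case: (u \in T0); [rewrite sum_eq_indicator eqxx | apply: P_rows].
- by have [a en] := P_en u; exists a; apply: enabled_absorb_at.
Qed.

Lemma absorb_at_absorbing : absorbing absorb_at T0.
Proof. by move=> u uT a _; rewrite /absorb_at uT eqxx. Qed.

Lemma absorb_at_sched sg : is_scheduler P sg -> is_scheduler absorb_at sg.
Proof.
move=> sg_valid s0 h; case: (sg_valid s0 h) => sg0 sg_en sg1; split=> // a a_dis.
by apply: sg_en; apply: contra a_dis; apply: enabled_absorb_at.
Qed.

(* Reaching [T0] only depends on the steps taken before [T0] is hit. *)
Lemma reach_within_absorb_at sg1 sg2 s0 k h :
  (forall h a, last_state s0 h \notin T0 -> sg1 s0 h a = sg2 s0 h a) ->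
  reach_within absorb_at sg1 T0 s0 k h = reach_within P sg2 T0 s0 k h.
Proof.
move=> sg12; elim: k h => [|k IH] h //=; case: ifP => // uT.
by apply: eq_bigr => a _; apply: eq_bigr => t _; rewrite IH sg12 ?uT // /absorb_at uT.
Qed.

Lemma Pr_reach_absorb_at sg1 sg2 s :
  (forall s0 h a, last_state s0 h \notin T0 -> sg1 s0 h a = sg2 s0 h a) ->
  Pr_reach absorb_at sg1 s T0 = Pr_reach P sg2 s T0.
Proof.
move=> sg12; rewrite /Pr_reach.
suff -> : (fun k => reach_within absorb_at sg1 T0 s k [::]) =
  (fun k => reach_within P sg2 T0 s k [::]) by [].
by apply/boolp.funext => k; apply: reach_within_absorb_at => h a; apply: sg12.
Qed.

Definition md_extend (d : S -> Act) u : Act := if u \in T0 then some_enabled wf u else d u.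

Lemma md_extend_md d : is_md absorb_at d -> is_md P (md_extend d).
Proof.
move=> d_en u; rewrite /md_extend; case: ifP => uT; first exact: xchooseP.
by move: (d_en u); rewrite /enabled /absorb_at uT.
Qed.

Lemma md_optimal_reach (y : R) : exists2 d, is_md P d & forall sg, is_scheduler P sg ->
  forall u, y * Pr_reach P sg u T0 <= y * Pr_reach P (md_sched R d) u T0.
Proof.
have [d d_md d_opt] := objective_md_optimal absorb_at_wf absorb_at_absorbing
  (fun _ : 'I_1 => y) (fun _ => subxx T0).
have objE sg u : is_scheduler absorb_at sg ->
    objective absorb_at (fun _ : 'I_1 => y) (fun=> T0) sg u = y * Pr_reach absorb_at sg u T0.
  by move=> sg_valid; rewrite /objective big_ord1 (Pr_reach_expect absorb_at_wf sg_valid) //;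
    apply: absorb_at_absorbing.
exists (md_extend d); first exact: md_extend_md.
move=> sg sg_valid u; rewrite -(Pr_reach_absorb_at (sg1 := sg)) //.
rewrite -(Pr_reach_absorb_at (sg1 := md_sched R d)); last first.
  by move=> s0 h a uT; rewrite /md_sched /md_extend (negbTE uT).
have md_valid := md_sched_valid d_md; have sg_valid' := absorb_at_sched sg_valid.
by rewrite -!objE //; apply: d_opt.
Qed.

End AbsorbingTarget.

Section Groups.
Variables (R : realType) (S Act : finType) (P : S -> Act -> S -> R).
Hypothesis wf : mdp_wf P.
Variables (n m : nat) (q : 'I_m -> rat) (s : 'I_m -> S) (k : 'I_m -> 'I_n).
Variable T : 'I_m -> {set S}.
Hypothesis k_surj : forall j, exists i, k i = j.

Definition group_value j (tau : scheduler R S Act) : R :=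
  \sum_(i | k i == j) ratr (q i) * Pr_reach P tau (s i) (T i).

Lemma relsum_group sig : relsum P q s k T sig = \sum_j group_value j (sig j).
Proof.
rewrite /relsum (partition_big k predT) //=; apply: eq_bigr => j _.
by apply: eq_big => [i //|i /= /eqP ->].
Qed.

Definition group_md_optimal : Prop := forall j (x : R), exists2 d, is_md P d &
  forall sg, is_scheduler P sg -> x * group_value j sg <= x * group_value j (md_sched R d).

Lemma group_md_optimal_same_start :
  (forall i i', k i = k i' -> s i = s i') -> (forall i, absorbing P (T i)) -> group_md_optimal.
Proof.
move=> s_eq T_abs j x; have [i0 i0j] := k_surj j.
have G_abs : absorbing P (\bigcup_i T i).
  by move=> u /bigcupP [i _ uT]; apply: (T_abs i).
pose wt i := if k i == j then x * ratr (q i) else 0.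
have [d d_md d_opt] := objective_md_optimal wf G_abs wt (fun i => bigcup_sup i isT).
have objE tau : is_scheduler P tau -> x * group_value j tau = objective P wt T tau (s i0).
  move=> tau_valid; rewrite /group_value mulr_sumr big_mkcond; apply: eq_bigr => i _.
  rewrite /wt; case: eqP => [ki|_]; last by rewrite mul0r.
  by rewrite (s_eq i i0) ?ki // (Pr_reach_expect wf tau_valid) // mulrA.
exists d => // sg sg_valid; have md_valid := md_sched_valid d_md.
by rewrite !objE //; apply: d_opt.
Qed.

Lemma group_md_optimal_same_target :
  (forall i i', k i = k i' -> ((0 <= q i) <-> (0 <= q i')) /\ T i = T i') -> group_md_optimal.
Proof.
move=> qT_eq j x; have [i0 i0j] := k_surj j.
pose y := x * (if 0 <= q i0 then 1 else -1).
have [d d_md d_opt] := md_optimal_reach wf (T i0) y.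
exists d => // sg sg_valid; rewrite /group_value !mulr_sumr; apply: ler_sum => i /eqP ki.
have [q_sign -> ] := qT_eq i i0 (etrans ki (esym i0j)).
have xq : x * ratr (q i) = `|ratr (q i) : R| * y.
  rewrite /y; case: ifP => q0.
    by rewrite ger0_norm ?ler0q ?q_sign // mulr1 mulrC.
  have qn : ratr (q i) < 0 :> R by rewrite ltNge ler0q; apply/negP => /q_sign; rewrite q0.
  by rewrite ltr0_norm // mulrN1 mulrNN mulrC.
have scale Z : x * (ratr (q i) * Z) = `|ratr (q i) : R| * (y * Z).
  by rewrite mulrA xq -mulrA.
by rewrite !scale ler_wpM2l ?d_opt.
Qed.

Lemma relsum_md_bounds : group_md_optimal -> exists dmin dmax : 'I_n -> S -> Act,
  [/\ forall j, is_md P (dmin j), forall j, is_md P (dmax j) &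
    forall sig, (forall j, is_scheduler P (sig j)) ->
      relsum P q s k T (fun j => md_sched R (dmin j)) <= relsum P q s k T sig <=
      relsum P q s k T (fun j => md_sched R (dmax j))].
Proof.
move=> grp; have [dmin dmin_md dmin_opt] := fin_all_exists2 (grp ^~ (-1)).
have [dmax dmax_md dmax_opt] := fin_all_exists2 (grp ^~ 1).
exists dmin, dmax; split=> // sig sig_valid; rewrite !relsum_group.
apply/andP; split; apply: ler_sum => j _.
  by have := dmin_opt j _ (sig_valid j); rewrite !mulN1r lerN2.
by have := dmax_opt j _ (sig_valid j); rewrite !mul1r.
Qed.

End Groups.

Lemma comp_holds_sandwich (R : realType) c (x r rmin rmax : R) : rmin <= r <= rmax ->
  comp_holds c r x -> comp_holds c rmax x \/ comp_holds c rmin x.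
Proof.
case/andP=> r_min r_max; case: c => [||eps] /=.
- by move=> xr; left; apply: le_trans r_max.
- by move=> xr; left; apply: lt_le_trans r_max.
- move=> far; have [xr|rx] := leP x r; [left | right]; apply: lt_le_trans far _.
    by rewrite ger0_norm ?subr_ge0 // (le_trans _ (ler_norm _)) // lerD2r.
  by rewrite ltr0_norm ?subr_lt0 // opprB distrC (le_trans _ (ler_norm _)) // lerD2l lerN2.
Qed.

Lemma surj_injective (T : finType) (f : T -> T) : (forall y, exists x, f x = y) -> injective f.
Proof.
move=> f_surj x x'; apply: (@image_injP _ _ f T) => //.
by apply/eqP/eq_card => y; have [x0 <-] := f_surj y; rewrite codom_f.
Qed.

Unset Implicit Arguments.
Set Strict Implicit.

Theorem corollary1 (R : realType) (S Act : finType) (P : S -> Act -> S -> R)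
  (n m : nat) (q : 'I_m -> rat) (s : 'I_m -> S) (k : 'I_m -> 'I_n)
  (T : 'I_m -> {set S}) (c : rcomp) (qc : rat) :
  (0 < #|S|)%N ->
  mdp_wf P ->
  (n <= m)%N ->
  (forall j : 'I_n, exists i : 'I_m, k i = j) ->
  comp_ok c ->
  ( n = m
    \/ ((forall i i', k i = k i' -> s i = s i') /\ (forall i, absorbing P (T i)))
    \/ (forall i i', k i = k i' -> ((0 <= q i) <-> (0 <= q i')) /\ T i = T i') ) ->
  (RelReach_gen P q s k T c qc <-> RelReach_md P q s k T c qc).
Proof.
move=> _ wf _ k_surj _ cond.
have grp : group_md_optimal P q s k T.
  case: cond => [n_eq_m|[[s_eq T_abs]|qT_eq]].
  - subst n; apply: (group_md_optimal_same_target wf s k_surj) => i i'.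
    by move/(surj_injective k_surj) ->.
  - exact: group_md_optimal_same_start.
  - exact: group_md_optimal_same_target.
have [dmin [dmax [dmin_md dmax_md bounds]]] := relsum_md_bounds grp.
split=> [[sig [sig_valid holds]]|[d [d_md holds]]].
  by case: (comp_holds_sandwich (bounds sig sig_valid) holds); [exists dmax | exists dmin].
by exists (fun j => md_sched R (d j)); split=> // j; apply: md_sched_valid.
Qed.
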